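(* Let $N:=\lceil 4(1-\gamma)^{-1}\rceil$, $\Delta_0:=(1-\gamma)^{-1}\max_{s\in\mathcal S}g^{\pi_0}(s)$, and let $\bar D>0$ satisfy $\max_{s\in\mathcal S}\max_{\pi,\pi'}D^{\pi}_{\pi'}(s)\le\bar D$ (maximum over all policies). Let PMD be run from $\pi_0$ with step sizes $\eta_t=2^t\cdot\bar D/\Delta_0$. Then for all $t\ge0$, $$V^{\pi_t}(s)-V^{\pi^*}(s)\le 2^{-\lfloor t/N\rfloor}\Delta_0\quad\forall s\in\mathcal S.$$
   Context: An infinite-horizon discounted MDP: finite state space $\mathcal S$, finite action space $\mathcal A$, transition probabilities $\mathcal P(s'\mid s,a)$, cost $c$, discount $\gamma\in[0,1)$. A policy $\pi$ assigns $\pi(\cdot\mid s)\in\Delta_{|\mathcal A|}$ (probability simplex). Let $\omega$ be a differentiable convex distance-generating function on $\Delta_{|\mathcal A|}$ and $D^{\pi'}_{\pi}(s):=\omega(\pi'(\cdot\mid s))-\omega(\pi(\cdot\mid s))-\langle\nabla\omega(\pi(\cdot\mid s)),\pi'(\cdot\mid s)-\pi(\cdot\mid s)\rangle$. For each $s$, $p\mapsto h^p(s)$ is closed convex on $\Delta_{|\mathcal A|}$ and $\mu_h$-strongly convex ($\mu_h\ge0$) w.r.t. this Bregman distance. $V^\pi(s)=\mathbb E[\sum_{t\ge0}\gamma^t(c(s_t,a_t)+h^{\pi(\cdot\mid s_t)}(s_t))\mid s_0=s,\ a_t\sim\pi(\cdot\mid s_t),\ s_{t+1}\sim\mathcal P(\cdot\mid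 s_t,a_t)]$, $Q^\pi(s,a)$ the same with $a_0=a$. $\pi^*$ is an optimal policy ($V^{\pi^*}\le V^\pi$ pointwise for all $\pi$). Advantage: $\psi^\pi(s,p):=\langle Q^\pi(s,\cdot),p\rangle-V^\pi(s)+h^p(s)-h^{\pi(\cdot\mid s)}(s)$; gap $g^\pi(s):=\max_{p\in\Delta_{|\mathcal A|}}\{-\psi^\pi(s,p)\}$. PMD: $\pi_{t+1}(\cdot\mid s)=\operatorname{argmin}_{p\in\Delta_{|\mathcal A|}}\{\eta_t[\langle Q^{\pi_t}(s,\cdot),p\rangle+h^p(s)]+\omega(p)-\omega(\pi_t(\cdot\mid s))-\langle\nabla\omega(\pi_t(\cdot\mid s)),p-\pi_t(\cdot\mid s)\rangle\}$ for all $s$. *)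

From HB Require Import structures.
From mathcomp Require Import all_boot all_order all_algebra.
From mathcomp Require Import all_classical all_reals all_analysis.
Set Implicit Arguments. Unset Strict Implicit. Unset Printing Implicit Defensive.
Import Order.TTheory GRing.Theory Num.Theory.
Local Open Scope classical_set_scope.
Local Open Scope ring_scope.

Section PMD.
Variables (R : realType) (S A : finType).

Definition simplex : set (A -> R) :=
  [set p | (forall a, 0 <= p a) /\ \sum_a p a = 1].

Definition dotA (u v : A -> R) : R := \sum_a u a * v a.

(* sup-norm distance on A -> R (all norms are equivalent in finite dim.) *)
Definition supdist (p q : A -> R) : R := \big[Num.max/0]_a `|p a - q a|.

Definition is_policy (pi : S -> A -> R) : Prop := forall s, simplex (pi s).

Definition breg (omega : (A -> R) -> R) (gomega : (A -> R) -> A -> R)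
  (p' p : A -> R) : R :=
  omega p' - omega p - dotA (gomega p) (fun a => p' a - p a).

Definition convex_on_simplex (f : (A -> R) -> R) : Prop :=
  forall p q (l : R), simplex p -> simplex q -> 0 <= l <= 1 ->
    f (fun a => l * p a + (1 - l) * q a) <= l * f p + (1 - l) * f q.

(* closed (= lower semicontinuous) on the simplex *)
Definition lsc_on_simplex (f : (A -> R) -> R) : Prop :=
  forall p (r : R), simplex p -> r < f p ->
    exists e : R, 0 < e /\ forall q, simplex q -> supdist q p < e -> r < f q.

Definition grad_on_simplex (omega : (A -> R) -> R) (gomega : (A -> R) -> A -> R)
  : Prop :=
  forall p, simplex p -> forall e : R, 0 < e -> exists d : R, 0 < d /\
    forall v : A -> R, supdist v (fun _ => 0) < d ->
      `| omega (fun a => p a + v a) - omega p - dotA (gomega p) v |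
        <= e * supdist v (fun _ => 0).

(* mu-strong convexity w.r.t. the Bregman distance of omega:
   p |-> f p - mu * omega p is convex on the simplex *)
Definition strongly_convex_wrt (mu : R) (omega : (A -> R) -> R)
  (f : (A -> R) -> R) : Prop :=
  convex_on_simplex (fun p => f p - mu * omega p).

Variables (P : S -> A -> S -> R) (c : S -> A -> R) (gamma : R)
  (h : S -> (A -> R) -> R).

Definition rpi (pi : S -> A -> R) (s : S) : R :=
  \sum_a pi s a * c s a + h s (pi s).

Definition stepd (pi : S -> A -> R) (mu : S -> R) : S -> R :=
  fun s' => \sum_s \sum_a mu s * pi s a * P s a s'.

Definition distt (pi : S -> A -> R) (mu : S -> R) (t : nat) : S -> R :=
  iter t (stepd pi) mu.

Definition dirac (s : S) : S -> R := fun s' => if s' == s then 1 else 0.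

(* V^pi(s) = E[ sum_t gamma^t (c(s_t,a_t) + h^{pi(.|s_t)}(s_t)) | s_0 = s ] *)
Definition Vf (pi : S -> A -> R) (s : S) : R :=
  \big[+%R/0%R]_(0 <= t <oo) (gamma ^+ t * \sum_s' distt pi (dirac s) t s' * rpi pi s').

(* Q^pi(s,a): same with a_0 = a; then s_1 ~ P(.|s,a) and pi is followed *)
Definition Qf (pi : S -> A -> R) (s : S) (a : A) : R :=
  c s a + h s (pi s) +
  \big[+%R/0%R]_(0 <= t <oo) (gamma ^+ t.+1 * \sum_s' distt pi (P s a) t s' * rpi pi s').

Definition psi (pi : S -> A -> R) (s : S) (p : A -> R) : R :=
  dotA (Qf pi s) p - Vf pi s + h s p - h s (pi s).

Definition gap (pi : S -> A -> R) (s : S) : R :=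
  sup [set - psi pi s p | p in simplex].

Definition Delta0 (pi0 : S -> A -> R) : R :=
  (1 - gamma)^-1 * sup (range (gap pi0)).

Definition Nconst : nat := `|Num.ceil (4 / (1 - gamma))|%N.

Definition pmd_obj (omega : (A -> R) -> R) (gomega : (A -> R) -> A -> R)
  (eta : R) (pi : S -> A -> R) (s : S) (p : A -> R) : R :=
  eta * (dotA (Qf pi s) p + h s p) + breg omega gomega p (pi s).

End PMD.

From Pilot Require Import Defs.
From HB Require Import structures.
From mathcomp Require Import all_boot all_order all_algebra.
From mathcomp Require Import all_classical all_reals all_analysis.
From mathcomp Require Import ring lra.
Import Order.TTheory GRing.Theory Num.Theory.
Import numFieldNormedType.Exports.
Local Open Scope classical_set_scope.
Local Open Scope ring_scope.

(* Write V_t for the value of pi_t and V' for the value of the comparator pi'.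
   Since pi_(t+1)(.|s) minimises the mirror-descent objective, comparing it with
   pi_t(.|s) and with pi'(.|s) gives
     psi^(pi_t)(s, pi_(t+1)) <= 0   and
     psi^(pi_t)(s, pi_(t+1)) <= psi^(pi_t)(s, pi') + Dbar / eta_t.
   By the Bellman equations the difference of two value functions solves a
   discounted fixed-point equation whose forcing term is an advantage, so a maximum
   principle turns these inequalities into V_(t+1) <= V_t and
     max_s (V_(t+1) - V') <= gamma * max_s (V_t - V') + Delta_0 / 2^t,
   while max_s (V_0 - V') <= Delta_0 by definition of the gap.  Such a perturbed
   contraction halves within every block of N >= 4 / (1 - gamma) steps. *)

(** * Perturbed contractions *)

Lemma expr_mul_bernoulli_le1 {R : realFieldType} (n : nat) {g : R} :
  0 <= g <= 1 -> g ^+ n * (1 + n%:R * (1 - g)) <= 1.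
Proof.
move=> /andP[g_ge0 g_le1]; elim: n => [|n IH]; first by rewrite expr0 mul0r addr0 mulr1.
have gn_ge0 : 0 <= g ^+ n.+1 by apply: exprn_ge0.
have gn_le1 : g ^+ n.+1 <= 1 by apply: exprn_ile1.
have -> : g ^+ n.+1 * (1 + n.+1%:R * (1 - g)) =
    g * (g ^+ n * (1 + n%:R * (1 - g))) + g ^+ n.+1 * (1 - g).
  by rewrite exprS -natr1; ring.
have IHg : g * (g ^+ n * (1 + n%:R * (1 - g))) <= g by rewrite ler_piMr.
nra.
Qed.

Lemma halving_block_small {R : realType} {g B : R} {e : nat -> R} :
  0 <= g <= 1 / 2 -> 0 <= B ->
  (forall k, e k.+1 <= g * e k + B / 2 ^+ k) -> e 0 <= B ->
  forall m, e m <= g ^+ m * B + 2 * m%:R * B / 2 ^+ m.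
Proof.
move=> /andP[g_ge0 g_small] B_ge0 e_step e0_le.
elim=> [|m IH]; first by rewrite expr0 mul1r mulr0n mulr0 !mul0r addr0.
apply: le_trans (e_step m) _.
have pow2_gt0 : 0 < (2 : R) ^+ m := exprn_gt0 _ (ltr0Sn R 1).
have x_ge0 : 0 <= B / 2 ^+ m by rewrite divr_ge0 // ltW.
have m_ge0 : 0 <= m%:R :> R := ler0n _ _.
have -> : 2 * m.+1%:R * B / 2 ^+ m.+1 = (m%:R + 1) * (B / 2 ^+ m).
  by rewrite exprS -natr1; field; rewrite gt_eqF.
have IHg : g * e m <= g * (g ^+ m * B + 2 * m%:R * (B / 2 ^+ m)).
  by apply: ler_wpM2l => //; rewrite mulrA.
have mx_ge0 : 0 <= m%:R * (B / 2 ^+ m) by apply: mulr_ge0.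
rewrite exprS; nra.
Qed.

Lemma halving_block_shift {R : realType} {g B : R} {e : nat -> R} :
  0 <= g <= 1 -> 0 <= B -> (forall k, e k.+1 <= e k) ->
  (forall k, e k.+1 <= g * e k + B / 2 ^+ k) -> e 0 <= B ->
  forall m, e (4 + m) <= g ^+ m * B + (B - B / 2 ^+ m) / 8.
Proof.
move=> /andP[g_ge0 g_le1] B_ge0 e_nonincr e_step e0_le.
elim=> [|m IH].
  have e4_le : e 4 <= e 0 by move/nonincreasing_seqP: e_nonincr; apply.
  rewrite !expr0 divr1; lra.
apply: le_trans (e_step (4 + m)) _.
have pow2_gt0 k : 0 < (2 : R) ^+ k := exprn_gt0 _ (ltr0Sn R 1).
set x := B / 2 ^+ m.
have x_ge0 : 0 <= x by rewrite divr_ge0 // ltW.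
have x_leB : x <= B by rewrite ler_pdivrMr // ler_peMr // exprn_ege1 //; lra.
have -> : B / 2 ^+ (4 + m) = x / 16 by rewrite exprD /x; field; rewrite !gt_eqF.
have -> : B / 2 ^+ m.+1 = x / 2 by rewrite exprS /x; field; rewrite !gt_eqF.
have IHg : g * e (4 + m) <= g * (g ^+ m * B + (B - x) / 8) by apply: ler_wpM2l.
have gBx : g * (B - x) <= B - x by rewrite ler_piMl // subr_ge0.
rewrite exprS; nra.
Qed.

Lemma halving_block {R : realType} {g B : R} {e : nat -> R} {N : nat} :
  0 <= g -> 4 <= N%:R * (1 - g) -> 0 <= B -> (forall k, e k.+1 <= e k) ->
  (forall k, e k.+1 <= g * e k + B / 2 ^+ k) -> e 0 <= B ->
  e N <= B / 2.
Proof.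
move=> g_ge0 N_large B_ge0 e_nonincr e_step e0_le.
have e_homo : {homo e : m n / (m <= n)%N >-> n <= m} by apply/nonincreasing_seqP.
have g_le1 : g <= 1.
  rewrite leNgt; apply/negP => g_gt1.
  have : N%:R * (1 - g) <= 0 by rewrite mulr_ge0_le0 // subr_le0 ltW.
  lra.
have N_ge4 : (4 <= N)%N.
  by rewrite -(ler_nat R); apply: le_trans N_large _; rewrite ler_piMr // gerBl.
have [g_small|g_large] := lerP g (1 / 2).
  have g_small' : 0 <= g <= 1 / 2 by rewrite g_ge0 g_small.
  have [g0|g_neq0] := eqVneq g 0.
    apply: le_trans (e_homo _ _ N_ge4) _.
    apply: le_trans (halving_block_small g_small' B_ge0 e_step e0_le 4) _.
    by rewrite g0 expr0n mul0r add0r; lra.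
  have N_ge5 : (5 <= N)%N.
    rewrite ltn_neqAle N_ge4 andbT; apply/eqP => N_eq4.
    have g_gt0 : 0 < g by rewrite lt_def g_neq0 g_ge0.
    by move: N_large; rewrite -N_eq4; lra.
  apply: le_trans (e_homo _ _ N_ge5) _.
  apply: le_trans (halving_block_small g_small' B_ge0 e_step e0_le 5) _.
  have g5 : g ^+ 5 <= 1 / 32.
    apply: (@le_trans _ _ ((1 / 2) ^+ 5)); first by rewrite lerXn2r // nnegrE; lra.
    by rewrite !exprS expr0; lra.
  have g5B : g ^+ 5 * B <= 1 / 32 * B by exact: ler_wpM2r.
  have -> : (2 : R) ^+ 5 = 32 by rewrite !exprS expr0; lra.
  lra.
(* The first four steps only use monotonicity, so the perturbations left sum to at
   most B / 8, and Bernoulli's inequality gives g ^+ (N - 4) <= 1 / 3. *)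
have g_unit : 0 <= g <= 1 by rewrite g_ge0 g_le1.
rewrite -(subnKC N_ge4).
apply: le_trans (halving_block_shift g_unit B_ge0 e_nonincr e_step e0_le (N - 4)%N) _.
set n := (N - 4)%N.
have n_large : 2 <= n%:R * (1 - g) by rewrite /n natrB //; lra.
have bernoulli := expr_mul_bernoulli_le1 n g_unit.
have gn_ge0 : 0 <= g ^+ n := exprn_ge0 _ g_ge0.
have gnB : g ^+ n * B <= B / 3 by nra.
have x_ge0 : 0 <= B / 2 ^+ n by rewrite divr_ge0 // exprn_ge0.
lra.
Qed.

Lemma halving_by_blocks {R : realType} {g D : R} {e : nat -> R} {N : nat} :
  0 <= g -> 4 <= N%:R * (1 - g) -> 0 <= D -> (forall t, e t.+1 <= e t) ->
  (forall t, e t.+1 <= g * e t + D / 2 ^+ t) -> e 0 <= D ->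
  forall t, e t <= 2 ^- (t %/ N)%N * D.
Proof.
move=> g_ge0 N_large D_ge0 e_nonincr e_step e0_le.
have e_homo : {homo e : m n / (m <= n)%N >-> n <= m} by apply/nonincreasing_seqP.
have N_gt0 : (0 < N)%N by rewrite lt0n; apply: contraTneq N_large => ->; rewrite mul0r; lra.
have pow2_gt0 k : 0 < (2 : R) ^+ k := exprn_gt0 _ (ltr0Sn R 1).
have block_end j : e (j * N)%N <= D / 2 ^+ j.
  elim: j => [|j IH]; first by rewrite expr0 divr1.
  have B_ge0 : 0 <= D / 2 ^+ j by rewrite divr_ge0 // ltW.
  have block_step k : e (j * N + k.+1)%N <= g * e (j * N + k)%N + D / 2 ^+ j / 2 ^+ k.
    rewrite addnS; apply: le_trans (e_step _) _; rewrite lerD2l -mulrA -invfM -exprD.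
    rewrite ler_wpM2l // lef_pV2 ?posrE // ler_eXn2l ?ltr1n //.
    by rewrite leq_add2r leq_pmulr.
  have block_nonincr k : e (j * N + k.+1)%N <= e (j * N + k)%N by rewrite addnS.
  have block_start : e (j * N + 0)%N <= D / 2 ^+ j by rewrite addn0.
  have -> : D / 2 ^+ j.+1 = D / 2 ^+ j / 2 by rewrite exprS; field; rewrite gt_eqF.
  rewrite mulSn addnC.
  exact: (halving_block (e := fun k => e (j * N + k)%N) g_ge0 N_large B_ge0
    block_nonincr block_step block_start).
move=> t; rewrite mulrC; apply: le_trans (block_end _).
exact/e_homo/leq_divM.
Qed.

(** * Distributions and convexity on the simplex *)

Lemma simplex_sum_le {R : realType} {T : finType} {w F : T -> R} {b : R} :
  simplex w -> (forall x, F x <= b) -> \sum_x w x * F x <= b.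
Proof.
move=> [w_ge0 w_sum1] F_le; apply: le_trans (_ : \sum_x w x * b <= b).
  by apply: ler_sum => x _; apply: ler_wpM2l.
by rewrite -mulr_suml w_sum1 mul1r.
Qed.

Lemma simplex_norm_sum_le {R : realType} {T : finType} {w : T -> R} (F : T -> R) :
  simplex w -> `|\sum_x w x * F x| <= \sum_x `|F x|.
Proof.
move=> w_simplex; apply: le_trans (ler_norm_sum _ _ _) _.
under eq_bigr => x _ do rewrite normrM (ger0_norm (w_simplex.1 x)).
by apply: simplex_sum_le => // x; rewrite (bigD1 x) //= lerDl sumr_ge0.
Qed.

Lemma simplex_mixture {R : realType} {T U : finType} {mu : T -> R} {k : T -> U -> R} :
  simplex mu -> (forall x, simplex (k x)) -> simplex (fun y => \sum_x mu x * k x y).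
Proof.
move=> [mu_ge0 mu_sum1] k_simplex; split=> [y|].
  by apply: sumr_ge0 => x _; apply: mulr_ge0 => //; case: (k_simplex x).
rewrite exchange_big /= -[RHS]mu_sum1; apply: eq_bigr => x _.
by case: (k_simplex x) => _ k_sum1; rewrite -mulr_sumr k_sum1 mulr1.
Qed.

Lemma sum_diracM (R : realType) {T : finType} (F : T -> R) x :
  \sum_y Defs.dirac R x y * F y = F x.
Proof.
rewrite (bigD1 x) //= big1 => [|y /negbTE y_neq]; first by rewrite /Defs.dirac eqxx mul1r addr0.
by rewrite /Defs.dirac y_neq mul0r.
Qed.

Lemma sum_Mdirac (R : realType) {T : finType} (F : T -> R) x :
  \sum_y F y * Defs.dirac R y x = F x.
Proof.
rewrite (bigD1 x) //= big1 => [|y /negbTE y_neq]; first by rewrite /Defs.dirac eqxx mulr1 addr0.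
by rewrite /Defs.dirac eq_sym y_neq mulr0.
Qed.

Lemma dirac_simplex (R : realType) {T : finType} (x : T) : simplex (Defs.dirac R x).
Proof.
split=> [y|]; first by rewrite /Defs.dirac; case: ifP.
by rewrite (bigD1 x) //= big1 => [|y /negbTE y_neq]; rewrite /Defs.dirac ?eqxx ?y_neq ?addr0.
Qed.

Lemma discounted_max_principle {R : realType} {S : finType} {gamma G : R}
    {w : S -> S -> R} {z e : S -> R} :
  0 <= gamma <= 1 -> (forall s, simplex (w s)) ->
  (forall s, z s <= gamma * \sum_s' w s s' * z s' + e s) -> (forall s, e s <= G) ->
  forall s, (1 - gamma) * z s <= G.
Proof.
move=> /andP[gamma_ge0 gamma_le1] w_simplex z_le e_le s.
have [s1 _ z_max] := @arg_maxP _ R S s xpredT z isT.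
have avg_le : \sum_s' w s1 s' * z s' <= z s1.
  by apply: simplex_sum_le => // s'; exact: z_max.
have z1_le := z_le s1; have e1_le := e_le s1.
have avg_scaled : gamma * \sum_s' w s1 s' * z s' <= gamma * z s1 by exact: ler_wpM2l.
have z_scaled : (1 - gamma) * z s <= (1 - gamma) * z s1.
  by rewrite ler_wpM2l ?subr_ge0 //; exact: z_max.
lra.
Qed.

Lemma convex_segment_le {R : realType} {A : finType} {f : (A -> R) -> R} {p q l} :
  convex_on_simplex f -> simplex p -> simplex q -> 0 <= l <= 1 ->
  f (fun a => q a + l * (p a - q a)) <= l * f p + (1 - l) * f q.
Proof.
move=> f_cvx p_simplex q_simplex l_unit.
have -> : (fun a => q a + l * (p a - q a)) = (fun a => l * p a + (1 - l) * q a).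
  by apply: funext => a; ring.
exact: f_cvx.
Qed.

Lemma convex_simplex_le_vertices {R : realType} {A : finType} {f : (A -> R) -> R} {p} :
  convex_on_simplex f -> simplex p -> f p <= \sum_a `|f (Defs.dirac R a)|.
Proof.
move=> f_cvx; set M := \sum_a _.
have vertex_le a : f (Defs.dirac R a) <= M.
  by apply: le_trans (ler_norm _) _; rewrite /M (bigD1 a) //= lerDl sumr_ge0.
suff supp_le (l : seq A) q : simplex q -> (forall b, b \notin l -> q b = 0) -> f q <= M.
  by move=> p_simplex; apply: (supp_le (enum A)) => // b; rewrite mem_enum.
elim: l q => [|a l IH] q [q_ge0 q_sum1] q_supp.
  by move: q_sum1; rewrite big1 // => /esym/eqP; rewrite oner_eq0.
have rest_sum : \sum_(b | b != a) q b = 1 - q a.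
  by rewrite -q_sum1 [in RHS](bigD1 a) //= addrC addrK.
have [qa1|qa_neq1] := eqVneq (q a) 1.
  suff -> : q = Defs.dirac R a by exact: vertex_le.
  apply: funext => b; rewrite /Defs.dirac; case: eqP => [->//|/eqP b_neq].
  apply/eqP; rewrite eq_le q_ge0 andbT -(subrr 1) -{2}qa1 -rest_sum.
  by rewrite (bigD1 b) //= lerDl sumr_ge0.
have qa_lt1 : q a < 1 by rewrite lt_neqAle qa_neq1 -subr_ge0 -rest_sum sumr_ge0.
have qa_unit : 0 <= q a <= 1 by rewrite q_ge0 ltW.
pose r b := if b == a then 0 else q b / (1 - q a).
have r_simplex : simplex r.
  split=> [b|]; first by rewrite /r; case: ifP => // _; rewrite divr_ge0 ?q_ge0 // subr_ge0 ltW.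
  rewrite (bigD1 a) //= /r eqxx add0r.
  under eq_bigr => b /negbTE -> do [].
  by rewrite -mulr_suml rest_sum divff // subr_eq0 eq_sym.
have r_le : f r <= M.
  apply: IH => // b b_notin; rewrite /r; case: eqP => // /eqP b_neq.
  by rewrite q_supp ?mul0r // in_cons negb_or b_neq.
have -> : q = fun b => q a * Defs.dirac R a b + (1 - q a) * r b.
  apply: funext => b; rewrite /Defs.dirac /r; case: eqP => [->|_]; first by ring.
  by rewrite mulr0 add0r mulrC divfK // subr_eq0 eq_sym.
apply: le_trans (f_cvx _ _ _ (dirac_simplex R a) r_simplex qa_unit) _.
have vertex_part : q a * f (Defs.dirac R a) <= q a * M by rewrite ler_wpM2l.
have rest_part : (1 - q a) * f r <= (1 - q a) * M by rewrite ler_wpM2l // subr_ge0 ltW.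
lra.
Qed.

Lemma convex_simplex_bounded_below {R : realType} {A : finType} {f : (A -> R) -> R} :
  convex_on_simplex f -> exists L, forall p, simplex p -> L <= f p.
Proof.
move=> f_cvx; set M := \sum_a `|f (Defs.dirac R a)|.
have [A_empty|A_nonempty] := eqVneq #|A| 0%N.
  exists 0 => p [_]; rewrite big_pred0 => [/esym/eqP|a]; first by rewrite oner_eq0.
  by move: (card0_eq A_empty a); rewrite !inE.
set n : R := #|A|%:R.
have n_gt0 : 0 < n by rewrite ltr0n lt0n.
set u := fun _ : A => n^-1.
have u_simplex : simplex u.
  split=> [a|]; first by rewrite invr_ge0 ltW.
  by rewrite sumr_const -/n -mulr_natr mulVf // gt_eqF.
(* The barycenter u is the convex combination l p + (1 - l) p' of p and a point p'
   of the simplex, so f p is bounded below through f u <= l f p + (1 - l) M. *)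
set l := (n + 1)^-1.
have l_gt0 : 0 < l by rewrite invr_gt0 addr_gt0.
have l_lt1 : l < 1 by rewrite invf_lt1 ?addr_gt0 //; lra.
exists ((f u - (1 - l) * M) / l) => p [p_ge0 p_sum1].
pose p' a := (u a - l * p a) / (1 - l).
have p'_simplex : simplex p'.
  split=> [a|].
    rewrite divr_ge0 // ?subr_ge0 ?(ltW l_lt1) // /u /l.
    have p_le1 : p a <= 1 by rewrite -p_sum1 (bigD1 a) //= lerDl sumr_ge0.
    have l_pa : (n + 1)^-1 * p a <= (n + 1)^-1 by rewrite ler_piMr // ltW.
    by apply: le_trans l_pa _; rewrite lef_pV2 ?posrE ?addr_gt0 // lerDl.
  rewrite /p' -mulr_suml sumrB -mulr_sumr p_sum1 mulr1 u_simplex.2.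
  by rewrite divff // subr_eq0 eq_sym lt_eqF.
have u_mix : u = fun a => l * p a + (1 - l) * p' a.
  by apply: funext => a; rewrite /p'; field; rewrite subr_eq0 eq_sym lt_eqF.
have u_le : f u <= l * f p + (1 - l) * f p'.
  by rewrite {1}u_mix; apply: f_cvx => //; rewrite (ltW l_gt0) (ltW l_lt1).
have p'_le : (1 - l) * f p' <= (1 - l) * M.
  by rewrite ler_wpM2l ?subr_ge0 ?(ltW l_lt1) //; exact: convex_simplex_le_vertices.
rewrite ler_pdivrMr //; lra.
Qed.

Lemma supdist0_scale_le {R : realType} {A : finType} (l : R) (v : A -> R) :
  0 <= l -> supdist (fun a => l * v a) (fun _ => 0) <= l * \sum_a `|v a|.
Proof.
move=> l_ge0; apply: (big_ind (fun x => x <= _)) => [|x y x_le y_le|a _].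
- by rewrite mulr_ge0 ?sumr_ge0.
- by rewrite ge_max x_le y_le.
by rewrite subr0 normrM ger0_norm // ler_wpM2l // (bigD1 a) //= lerDl sumr_ge0.
Qed.

Lemma breg_self {R : realType} {A : finType} (omega : (A -> R) -> R) gomega p :
  breg omega gomega p p = 0.
Proof. by rewrite /breg /dotA big1 ?subrr ?subr0 // => a _; rewrite subrr mulr0. Qed.

Lemma breg_ge0 {R : realType} {A : finType} {omega : (A -> R) -> R} {gomega p q} :
  convex_on_simplex omega -> grad_on_simplex omega gomega ->
  simplex p -> simplex q -> 0 <= breg omega gomega p q.
Proof.
move=> om_cvx om_grad p_simplex q_simplex.
set v := fun a => p a - q a; set D := dotA (gomega q) v; set K := \sum_a `|v a|.
rewrite /breg -/v -/D subr_ge0; apply/ler_addgt0Pr => e e_gt0.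
(* On the segment q + l v, convexity bounds the difference quotient of omega by
   omega p - omega q, and differentiability at q makes it e-close to D for small l. *)
have K_ge0 : 0 <= K := sumr_ge0 _ (fun a _ => normr_ge0 (v a)).
have K1_gt0 : 0 < K + 1 by rewrite ltr_wpDl.
have div_succ_le x : 0 <= x -> x / (K + 1) * K <= x.
  by move=> x_ge0; rewrite mulrAC ler_pdivrMr // ler_wpM2l // lerDl.
have [d [d_gt0 om_approx]] := om_grad q q_simplex _ (divr_gt0 e_gt0 K1_gt0).
set m := Num.min 1 (d / (K + 1)); pose l := m / 2.
have m_gt0 : 0 < m by rewrite lt_min ltr01 divr_gt0.
have l_gt0 : 0 < l by rewrite divr_gt0.
have m_le1 : m <= 1 by rewrite ge_min lexx.
have l_unit : 0 <= l <= 1 by rewrite ltW //= /l; lra.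
have lK_lt_d : l * K < d.
  have mK_le : m * K <= d / (K + 1) * K by rewrite ler_wpM2r // ge_min lexx orbT.
  have dK_le := div_succ_le d (ltW d_gt0).
  rewrite /l; lra.
have lv_sup := supdist0_scale_le l v (ltW l_gt0).
have := om_approx _ (le_lt_trans lv_sup lK_lt_d).
have -> : dotA (gomega q) (fun a => l * v a) = l * D.
  by rewrite /D /dotA mulr_sumr; apply: eq_bigr => a _; ring.
rewrite ler_norml => /andP[approx _].
have mix_le := convex_segment_le om_cvx p_simplex q_simplex l_unit.
have err_le : e / (K + 1) * supdist (fun a => l * v a) (fun _ => 0) <= e / (K + 1) * (l * K).
  by rewrite ler_wpM2l // ltW // divr_gt0.
have lerr_le : l * (e / (K + 1) * K) <= l * e.
  by rewrite ler_wpM2l ?(ltW l_gt0) ?div_succ_le ?ltW.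
rewrite -(ler_pM2l l_gt0); lra.
Qed.

Lemma le_sup_range {R : realType} {T : finType} (f : T -> R) x : f x <= sup (range f).
Proof.
apply: ub_le_sup; last by exists x.
exists (\sum_y `|f y|) => _ [y _ <-].
by apply: le_trans (ler_norm _) _; rewrite (bigD1 y) //= lerDl sumr_ge0.
Qed.

Lemma gap_ge {R : realType} {S A : finType} (P : S -> A -> S -> R) (c : S -> A -> R)
    (gamma : R) (h : S -> (A -> R) -> R) pi s {p} :
  convex_on_simplex (h s) -> simplex p -> - psi P c gamma h pi s p <= gap P c gamma h pi s.
Proof.
move=> h_cvx p_simplex; apply: ub_le_sup; last by exists p.
have [L h_ge] := convex_simplex_bounded_below h_cvx.
set Q := Qf P c gamma h pi s.
exists (\sum_a `|Q a| + Vf P c gamma h pi s - L + h s (pi s)) => _ [q q_simplex <-].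
have dot_ge : - dotA Q q <= \sum_a `|Q a|.
  rewrite /dotA; under eq_bigr do rewrite mulrC.
  by apply: le_trans (ler_norm _) _; rewrite normrN simplex_norm_sum_le.
have := h_ge q q_simplex; rewrite /psi -/Q; lra.
Qed.

(** * Policy evaluation *)

Section PolicyEvaluation.
Context {R : realType} {S A : finType} {P : S -> A -> S -> R} {c : S -> A -> R}.
Context {gamma : R} {h : S -> (A -> R) -> R}.
Hypothesis P_ge0 : forall s a s', 0 <= P s a s'.
Hypothesis P_sum1 : forall s a, \sum_s' P s a s' = 1.
Hypothesis gamma_ge0 : 0 <= gamma.
Hypothesis gamma_lt1 : gamma < 1.

Local Notation V := (Vf P c gamma h).
Local Notation psi := (psi P c gamma h).

Definition trans (p : A -> R) (s s' : S) : R := \sum_a p a * P s a s'.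

Definition bellman (p : A -> R) (W : S -> R) (s : S) : R :=
  \sum_a p a * c s a + h s p + gamma * \sum_s' trans p s s' * W s'.

Definition cost_term (pi : S -> A -> R) (mu : S -> R) (t : nat) : R :=
  gamma ^+ t * \sum_s' distt P pi mu t s' * rpi c h pi s'.

Lemma trans_simplex s {p} : simplex p -> simplex (trans p s).
Proof. by move=> p_simplex; apply: simplex_mixture => // a; split. Qed.

Lemma sum_transM p s (W : S -> R) :
  \sum_s' trans p s s' * W s' = \sum_a p a * \sum_s' P s a s' * W s'.
Proof.
under eq_bigr do rewrite mulr_suml.
rewrite exchange_big /=; apply: eq_bigr => a _.
by rewrite mulr_sumr; apply: eq_bigr => s' _; rewrite mulrA.
Qed.

Lemma stepdE pi mu : stepd P pi mu = fun s' => \sum_s mu s * trans (pi s) s s'.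
Proof.
apply: funext => s'; apply: eq_bigr => s _.
by rewrite /trans mulr_sumr; apply: eq_bigr => a _; rewrite mulrA.
Qed.

Lemma stepd_dirac pi s : stepd P pi (Defs.dirac R s) = trans (pi s) s.
Proof. by rewrite stepdE; apply: funext => s'; exact: sum_diracM. Qed.

Lemma distt_simplex pi mu t : is_policy pi -> simplex mu -> simplex (distt P pi mu t).
Proof.
move=> pi_pol mu_simplex; elim: t => //= t IH.
by rewrite stepdE; apply: simplex_mixture => // s; exact: trans_simplex.
Qed.

Lemma distt_linear pi mu t s' :
  distt P pi mu t s' = \sum_s mu s * distt P pi (Defs.dirac R s) t s'.
Proof.
elim: t s' => [|t IH] s'; first by rewrite /distt /= sum_Mdirac.
have distt_step m : distt P pi m t.+1 = stepd P pi (distt P pi m t) by [].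
rewrite distt_step /stepd.
under eq_bigr => s1 _ do under eq_bigr => a _ do rewrite IH !mulr_suml.
under [RHS]eq_bigr => s _ do rewrite distt_step /stepd mulr_sumr.
under [RHS]eq_bigr => s _ do under eq_bigr => s1 _ do rewrite mulr_sumr.
rewrite [RHS]exchange_big /=; apply: eq_bigr => s1 _.
rewrite [RHS]exchange_big /=; apply: eq_bigr => a _.
by apply: eq_bigr => s _; rewrite !mulrA.
Qed.

Lemma cost_term_linear pi mu t :
  cost_term pi mu t = \sum_s mu s * cost_term pi (Defs.dirac R s) t.
Proof.
rewrite /cost_term; under eq_bigr do rewrite distt_linear mulr_suml.
rewrite exchange_big /= mulr_sumr; apply: eq_bigr => s _.
rewrite [RHS]mulrCA; congr (_ * _).
by rewrite mulr_sumr; apply: eq_bigr => s' _; rewrite mulrA.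
Qed.

Lemma series_cost_term_linear pi mu n :
  series (cost_term pi mu) n = \sum_s mu s * series (cost_term pi (Defs.dirac R s)) n.
Proof.
rewrite /series /=; under eq_bigr do rewrite cost_term_linear.
by rewrite exchange_big /=; apply: eq_bigr => s _; rewrite mulr_sumr.
Qed.

Lemma Vf_cvg pi s : is_policy pi -> series (cost_term pi (Defs.dirac R s)) @ \oo --> V pi s.
Proof.
move=> pi_pol; apply: normed_cvg.
set C := \sum_s' `|rpi c h pi s'|.
apply: (@series_le_cvg _ _ (geometric C gamma)) => [n|n|n|].
- exact: normr_ge0.
- by rewrite /geometric /= mulr_ge0 ?exprn_ge0 ?sumr_ge0.
- rewrite /geometric /= normrM (ger0_norm (exprn_ge0 _ gamma_ge0)) mulrC.
  rewrite ler_wpM2r ?exprn_ge0 //.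
  exact/simplex_norm_sum_le/distt_simplex/dirac_simplex.
- by apply: is_cvg_geometric_series; rewrite ger0_norm.
Qed.

Lemma value_cvg pi mu : is_policy pi ->
  series (cost_term pi mu) @ \oo --> \sum_s mu s * V pi s.
Proof.
move=> pi_pol; under eq_cvg do rewrite series_cost_term_linear.
apply: cvg_big => [|s _]; first exact: add_continuous.
by apply: cvgM; [exact: cvg_cst | exact: Vf_cvg].
Qed.

Lemma Vf_bellman pi s : is_policy pi -> V pi s = bellman (pi s) (V pi) s.
Proof.
move=> pi_pol.
have series_shift n : series (cost_term pi (Defs.dirac R s)) n.+1 =
    rpi c h pi s + gamma * series (cost_term pi (trans (pi s) s)) n.
  rewrite /series /= big_nat_recl // /cost_term expr0 mul1r sum_diracM.
  congr (_ + _); rewrite mulr_sumr; apply: eq_bigr => t _.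
  by rewrite exprS -mulrA /distt iterSr stepd_dirac.
have : (fun n => series (cost_term pi (Defs.dirac R s)) n.+1) @ \oo -->
    bellman (pi s) (V pi) s.
  under eq_cvg do rewrite series_shift.
  apply: cvgD; first exact: cvg_cst.
  by apply: cvgM; [exact: cvg_cst | exact: value_cvg].
rewrite cvg_shiftS; exact: cvg_unique (Vf_cvg pi s pi_pol).
Qed.

Lemma Qf_bellman pi s a : is_policy pi ->
  Qf P c gamma h pi s a = c s a + h s (pi s) + gamma * \sum_s' P s a s' * V pi s'.
Proof.
move=> pi_pol; rewrite /Qf; congr (_ + _); apply: cvg_lim => //.
have -> : (fun n => \big[+%R/0%R]_(0 <= t < n)
     (gamma ^+ t.+1 * \sum_s' distt P pi (P s a) t s' * rpi c h pi s')) =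
     (fun n => gamma * series (cost_term pi (P s a)) n).
  apply: funext => n; rewrite /series /= mulr_sumr; apply: eq_bigr => t _.
  by rewrite exprS -mulrA.
by apply: cvgM; [exact: cvg_cst | exact: value_cvg].
Qed.

Lemma psi_bellman pi s {p} : is_policy pi -> simplex p ->
  psi pi s p = bellman p (V pi) s - V pi s.
Proof.
move=> pi_pol [_ p_sum1]; rewrite /Defs.psi /dotA /bellman sum_transM.
under eq_bigr do rewrite Qf_bellman // mulrC !mulrDr mulrCA.
by rewrite !big_split /= -mulr_suml p_sum1 mul1r -mulr_sumr; ring.
Qed.

Lemma psi_self pi s : is_policy pi -> psi pi s (pi s) = 0.
Proof. by move=> pi_pol; rewrite psi_bellman // -Vf_bellman // subrr. Qed.

Lemma bellmanB p W1 W2 s :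
  bellman p W1 s - bellman p W2 s = gamma * \sum_s' trans p s s' * (W1 s' - W2 s').
Proof.
rewrite /bellman; under [X in _ = _ * X]eq_bigr do rewrite mulrBr.
by rewrite sumrB; ring.
Qed.

Lemma bellmanB_le s {p W1 W2 b} : simplex p -> (forall s', W1 s' - W2 s' <= b) ->
  bellman p W1 s - bellman p W2 s <= gamma * b.
Proof.
move=> p_simplex W_le; rewrite bellmanB ler_wpM2l //.
exact: simplex_sum_le (trans_simplex s p_simplex) W_le.
Qed.

Lemma performance_difference pi pi' s : is_policy pi -> is_policy pi' ->
  V pi' s - V pi s = gamma * \sum_s' trans (pi' s) s s' * (V pi' s' - V pi s') + psi pi s (pi' s).
Proof.
move=> pi_pol pi'_pol; rewrite psi_bellman // -bellmanB {1}(Vf_bellman _ s pi'_pol).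
by ring.
Qed.

Lemma Vf_sub_le_psi pi pi' : is_policy pi -> is_policy pi' ->
  (forall s, psi pi s (pi' s) <= 0) -> forall s, V pi' s - V pi s <= psi pi s (pi' s).
Proof.
move=> pi_pol pi'_pol psi_le0.
have gamma_unit : 0 <= gamma <= 1 by rewrite gamma_ge0 ltW.
have V_le s : V pi' s - V pi s <= 0.
  rewrite -(pmulr_rle0 _ (_ : 0 < 1 - gamma)) ?subr_gt0 //; move: s.
  apply: (discounted_max_principle (z := fun s => V pi' s - V pi s)
    gamma_unit (fun s => trans_simplex s (pi'_pol s))) psi_le0 => s.
  by rewrite [X in X <= _]performance_difference.
move=> s; rewrite performance_difference // gerDr mulr_ge0_le0 //.
exact: simplex_sum_le (trans_simplex s (pi'_pol s)) V_le.
Qed.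

Lemma Vf_sub_le_gap pi pi' s :
  is_policy pi -> is_policy pi' -> (forall s, convex_on_simplex (h s)) ->
  (1 - gamma) * (V pi s - V pi' s) <= sup (range (gap P c gamma h pi)).
Proof.
move=> pi_pol pi'_pol h_cvx.
have gamma_unit : 0 <= gamma <= 1 by rewrite gamma_ge0 ltW.
have V_subE s0 : V pi s0 - V pi' s0 =
    gamma * \sum_s' trans (pi' s0) s0 s' * (V pi s' - V pi' s') + - psi pi s0 (pi' s0).
  rewrite -[LHS]opprB performance_difference // opprD -mulrN -sumrN.
  by congr (_ * _ + _); apply: eq_bigr => s' _; rewrite -mulrN opprB.
move: s; apply: (discounted_max_principle (z := fun s => V pi s - V pi' s)
  (e := fun s => - psi pi s (pi' s)) gamma_unit (fun s => trans_simplex s (pi'_pol s))).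
  by move=> s; rewrite V_subE.
move=> s; apply: le_trans (le_sup_range _ s).
exact: gap_ge (h_cvx s) (pi'_pol s).
Qed.

Lemma pmd_objE omega gomega eta pi s p :
  pmd_obj P c gamma h omega gomega eta pi s p =
  eta * psi pi s p + breg omega gomega p (pi s) + eta * (V pi s + h s (pi s)).
Proof. by rewrite /pmd_obj /Defs.psi; ring. Qed.

(** * Policy mirror descent *)

Section MirrorDescent.
Context {omega : (A -> R) -> R} {gomega : (A -> R) -> A -> R} {Dbar : R}.
Context {eta : nat -> R} {pit : nat -> S -> A -> R} {pistar : S -> A -> R}.
Hypothesis omega_cvx : convex_on_simplex omega.
Hypothesis omega_grad : grad_on_simplex omega gomega.
Hypothesis eta_gt0 : forall t, 0 < eta t.
Hypothesis pit0_pol : is_policy (pit 0).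
Hypothesis pmd_step : forall t s, simplex (pit t.+1 s) /\
  forall p, simplex p -> pmd_obj P c gamma h omega gomega (eta t) (pit t) s (pit t.+1 s)
                         <= pmd_obj P c gamma h omega gomega (eta t) (pit t) s p.
Hypothesis pistar_pol : is_policy pistar.
Hypothesis breg_pistar_le :
  forall s pi, is_policy pi -> breg omega gomega (pistar s) (pi s) <= Dbar.

Lemma pmd_policy t : is_policy (pit t).
Proof. by case: t => // t s; case: (pmd_step t s). Qed.

Lemma pmd_optimality t s {p} : simplex p ->
  eta t * psi (pit t) s (pit t.+1 s) + breg omega gomega (pit t.+1 s) (pit t s) <=
  eta t * psi (pit t) s p + breg omega gomega p (pit t s).
Proof. by move=> p_simplex; have := (pmd_step t s).2 p p_simplex; rewrite !pmd_objE lerD2r. Qed.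

Lemma pmd_psi_le0 t s : psi (pit t) s (pit t.+1 s) <= 0.
Proof.
have opt := pmd_optimality t s (pmd_policy t s).
rewrite psi_self ?breg_self ?mulr0 ?addr0 in opt; last exact: pmd_policy.
have breg_nonneg := breg_ge0 omega_cvx omega_grad (pmd_policy t.+1 s) (pmd_policy t s).
have : eta t * psi (pit t) s (pit t.+1 s) <= 0 by lra.
by rewrite pmulr_rle0.
Qed.

Lemma pmd_psi_le t s :
  psi (pit t) s (pit t.+1 s) <= psi (pit t) s (pistar s) + Dbar / eta t.
Proof.
have opt := pmd_optimality t s (pistar_pol s).
have breg_nonneg := breg_ge0 omega_cvx omega_grad (pmd_policy t.+1 s) (pmd_policy t s).
have breg_le := breg_pistar_le s _ (pmd_policy t).
rewrite -lerBlDl ler_pdivlMr ?eta_gt0 //; lra.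
Qed.

Lemma pmd_Vf_step t s : V (pit t.+1) s - V (pit t) s <= psi (pit t) s (pit t.+1 s).
Proof. exact: Vf_sub_le_psi (pmd_policy t) (pmd_policy t.+1) (pmd_psi_le0 t) s. Qed.

Lemma pmd_error_step t b : (forall s, V (pit t) s - V pistar s <= b) ->
  forall s, V (pit t.+1) s - V pistar s <= gamma * b + Dbar / eta t.
Proof.
move=> err_le s.
have V_step := pmd_Vf_step t s.
have psi_le := pmd_psi_le t s.
rewrite (psi_bellman _ _ (pmd_policy t) (pistar_pol s)) in psi_le.
have bellman_le := bellmanB_le s (pistar_pol s) err_le.
rewrite -(Vf_bellman _ _ pistar_pol) in bellman_le.
lra.
Qed.

Lemma pmd_halving (Delta : R) (N : nat) :
  4 <= N%:R * (1 - gamma) -> 0 <= Delta ->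
  (forall t, Dbar / eta t <= Delta / 2 ^+ t) ->
  (forall s, V (pit 0) s - V pistar s <= Delta) ->
  forall t s, V (pit t) s - V pistar s <= 2 ^- (t %/ N)%N * Delta.
Proof.
move=> N_large Delta_ge0 step_le init_le t s.
pose err t := \big[Num.max/0]_s (V (pit t) s - V pistar s).
have err_ge0 k : 0 <= err k := bigmax_ge_id _ _ _ _.
have err_ge k s' : V (pit k) s' - V pistar s' <= err k := le_bigmax _ _ s'.
have err_nonincr k : err k.+1 <= err k.
  apply: bigmax_le => // s' _; apply: le_trans (err_ge k s'); rewrite lerD2r.
  by rewrite -subr_le0; apply: le_trans (pmd_Vf_step k s') (pmd_psi_le0 k s').
have err_step k : err k.+1 <= gamma * err k + Delta / 2 ^+ k.
  apply: bigmax_le => [|s' _]; first by rewrite addr_ge0 ?mulr_ge0 ?divr_ge0 ?exprn_ge0.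
  by apply: le_trans (pmd_error_step _ _ (err_ge k) s') _; rewrite lerD2l.
have err0_le : err 0 <= Delta by apply: bigmax_le.
apply: le_trans (err_ge t s) _.
exact: halving_by_blocks gamma_ge0 N_large Delta_ge0 err_nonincr err_step err0_le t.
Qed.

End MirrorDescent.

End PolicyEvaluation.

Lemma Nconst_mul_ge4 {R : realType} {gamma : R} :
  0 <= gamma < 1 -> 4 <= (Nconst gamma)%:R * (1 - gamma).
Proof.
move=> /andP[gamma_ge0 gamma_lt1].
have one_sub_gt0 : 0 < 1 - gamma by rewrite subr_gt0.
have ratio_ge0 : 0 <= 4 / (1 - gamma) by rewrite divr_ge0 // ltW.
have ceil_nneg : 0 <= Num.ceil (4 / (1 - gamma)) by rewrite ceil_ge0; lra.
have -> : (Nconst gamma)%:R = (Num.ceil (4 / (1 - gamma)))%:~R :> R.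
  by rewrite /Nconst natr_absz ger0_norm.
by rewrite -ler_pdivrMr // ceil_ge.
Qed.

Theorem theorem3p5 (R : realType) (S A : finType)
  (P : S -> A -> S -> R) (c : S -> A -> R) (gamma : R)
  (h : S -> (A -> R) -> R) (mu_h : R)
  (omega : (A -> R) -> R) (gomega : (A -> R) -> A -> R)
  (Dbar : R) (pit : nat -> S -> A -> R) (pistar : S -> A -> R)
  (HP0 : forall s a s', 0 <= P s a s')
  (HP1 : forall s a, \sum_s' P s a s' = 1)
  (Hgamma : 0 <= gamma < 1)
  (Hom_cvx : convex_on_simplex omega)
  (Hom_diff : grad_on_simplex omega gomega)
  (Hmu : 0 <= mu_h)
  (Hh_cvx : forall s, convex_on_simplex (h s))
  (Hh_closed : forall s, lsc_on_simplex (h s))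
  (Hh_strong : forall s, strongly_convex_wrt mu_h omega (h s))
  (Hstar_pol : is_policy pistar)
  (Hstar_opt : forall pi, is_policy pi ->
     forall s, Vf P c gamma h pistar s <= Vf P c gamma h pi s)
  (HDbar_pos : 0 < Dbar)
  (HDbar : forall s (pi pi' : S -> A -> R), is_policy pi -> is_policy pi' ->
     breg omega gomega (pi s) (pi' s) <= Dbar)
  (Hpi0 : is_policy (pit 0%N))
  (HDelta0 : 0 < Delta0 P c gamma h (pit 0%N))
  (Hpmd : forall (t : nat) (s : S),
     simplex (pit t.+1 s) /\
     forall p, simplex p ->
       pmd_obj P c gamma h omega gomega
         (2 ^+ t * Dbar / Delta0 P c gamma h (pit 0%N)) (pit t) s (pit t.+1 s)
       <= pmd_obj P c gamma h omega gomega
         (2 ^+ t * Dbar / Delta0 P c gamma h (pit 0%N)) (pit t) s p) :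
  forall (t : nat) (s : S),
    Vf P c gamma h (pit t) s - Vf P c gamma h pistar s
      <= 2 ^- (t %/ Nconst gamma)%N * Delta0 P c gamma h (pit 0%N).
Proof.
case/andP: (Hgamma) => gamma_ge0 gamma_lt1.
set D0 := Delta0 P c gamma h (pit 0%N) in HDelta0 Hpmd *.
have pow2_gt0 t : 0 < (2 : R) ^+ t := exprn_gt0 t (ltr0Sn R 1).
have eta_gt0 t : 0 < 2 ^+ t * Dbar / D0 by rewrite divr_gt0 // mulr_gt0.
have step_le t : Dbar / (2 ^+ t * Dbar / D0) <= D0 / 2 ^+ t.
  by rewrite le_eqVlt; apply/orP; left; apply/eqP; field; rewrite !gt_eqF.
have breg_le s pi : is_policy pi -> breg omega gomega (pistar s) (pi s) <= Dbar.
  exact: HDbar.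
have init_le s : Vf P c gamma h (pit 0%N) s - Vf P c gamma h pistar s <= D0.
  rewrite /D0 /Delta0 ler_pdivlMl ?subr_gt0 //.
  exact: Vf_sub_le_gap HP0 HP1 gamma_ge0 gamma_lt1 _ _ s Hpi0 Hstar_pol Hh_cvx.
exact: (pmd_halving HP0 HP1 gamma_ge0 gamma_lt1 Hom_cvx Hom_diff eta_gt0 Hpi0 Hpmd
  Hstar_pol breg_le D0 _ (Nconst_mul_ge4 Hgamma) (ltW HDelta0) step_le init_le).
Qed.
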